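(* Let $G$ be a simple graph and let $K_{s_1},K_{s_2},\ldots,K_{s_k}$ be pairwise edge-disjoint cliques (complete subgraphs) of $G$ with $s_i\ge 3$ for all $i$. Then the independence number of the triangular signed graph $G_{\vartriangle}$ satisfies $$\alpha(G_{\vartriangle})\ge\sum_{i=1}^{k}\frac{\binom{s_i}{3}}{1+3(s_i-3)}.$$
   Context: Edges of $G$ are oriented and each triangle $\vartriangle$ of $G$ is given a cyclic orientation. The triangular signed graph $G_{\vartriangle}$ has the triangles of $G$ as vertices; two distinct triangles are adjacent if and only if they share an edge $e$ (the edge being positive if $e$ agrees with the orientations of both triangles or disagrees with both, and negative otherwise). The independence number $\alpha(G_{\vartriangle})$ is that of the underlying unsigned graph. *)

From HB Require Import structures.
From mathcomp Require Import all_boot all_order all_algebra.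
Set Implicit Arguments. Unset Strict Implicit. Unset Printing Implicit Defensive.

Definition simple_graph (T : finType) (e : rel T) : Prop :=
  irreflexive e /\ symmetric e.

Definition is_triangle (T : finType) (e : rel T) (t : {set T}) : bool :=
  (#|t| == 3) && [forall x in t, forall y in t, (x != y) ==> e x y].

(* Two distinct triangles are adjacent in the triangular (signed) graph iff
   they share an edge {x,y} of G.  Signs do not matter for alpha. *)
Definition tri_adj (T : finType) (e : rel T) (t1 t2 : {set T}) : bool :=
  (t1 != t2) && [exists x, exists y,
     [&& e x y, x \in t1, y \in t1, x \in t2 & y \in t2]].

Definition tri_independent (T : finType) (e : rel T) (I : {set {set T}}) : bool :=
  [forall t in I, is_triangle e t] &&
  [forall t1 in I, forall t2 in I, ~~ tri_adj e t1 t2].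

Definition alpha_tri (T : finType) (e : rel T) : nat :=
  \max_(I : {set {set T}} | tri_independent e I) #|I|.

Definition is_clique (T : finType) (e : rel T) (S : {set T}) : Prop :=
  forall x y, x \in S -> y \in S -> x != y -> e x y.

Definition edge_disjoint_cliques (T : finType) (e : rel T) (k : nat)
    (S : 'I_k -> {set T}) : Prop :=
  forall (i j : 'I_k) x y, e x y ->
    x \in S i -> y \in S i -> x \in S j -> y \in S j -> i = j.

From mathcomp Require Import all_boot all_order all_algebra.
From mathcomp Require Import zify.
Import Order.TTheory GRing.Theory Num.Theory.

Set Implicit Arguments.
Unset Strict Implicit.
Unset Printing Implicit Defensive.

(* Inside one clique K_s, a triangle shares an edge with at most 3(s-3) other
   triangles of the clique: such a neighbour arises from it by exchanging one of
   its 3 vertices for one of the s-3 remaining ones.  Hence a maximal independent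
   set of these C(s,3) triangles has at least C(s,3)/(1+3(s-3)) elements.  As the
   cliques are edge-disjoint, a triangle lies in at most one of them and two
   triangles from different cliques share no edge, so the union of these
   independent sets is independent in the triangular graph. *)

Section Independence.

Variables (U : finType) (adj : rel U).

Definition independent (I : {set U}) : bool :=
  [forall x in I, forall y in I, ~~ adj x y].

Lemma independentP (I : {set U}) :
  reflect {in I &, forall x y, ~~ adj x y} (independent I).
Proof.
apply: (iffP forall_inP) => [I_ind x y xI yI | I_ind x xI].
  by have /forall_inP := I_ind x xI; apply.
by apply/forall_inP => y; apply: I_ind.
Qed.

Lemma independent_bigcup (J : finType) (F : J -> {set U}) :
  (forall j, independent (F j)) ->
  (forall i j x y, x \in F i -> y \in F j -> adj x y -> i = j) ->
  independent (\bigcup_j F j).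
Proof.
move=> F_ind F_sep; apply/independentP => x y /bigcupP[i _ xFi] /bigcupP[j _ yFj].
apply/negP => adj_xy; have eq_ij := F_sep i j x y xFi yFj adj_xy.
by move: yFj adj_xy; rewrite -eq_ij => yFi; apply/negP/(independentP _ (F_ind i)).
Qed.

Hypotheses (adj_irr : irreflexive adj) (adj_sym : symmetric adj).

Lemma independent_setU1 x (I : {set U}) :
  independent I -> {in I, forall y, ~~ adj x y} -> independent (x |: I).
Proof.
move=> /independentP I_ind x_ind; apply/independentP.
have x_ind' : {in I, forall y, ~~ adj y x} by move=> y yI; rewrite adj_sym x_ind.
by move=> y z /setU1P[-> | yI] /setU1P[-> | zI]; rewrite ?adj_irr ?x_ind ?x_ind' ?I_ind.
Qed.

(* A maximal independent subset I of A dominates A, so A is covered by the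
   closed neighbourhoods of the vertices of I. *)
Lemma independent_subset_degree (A : {set U}) (d : nat) :
  {in A, forall x, #|[set y in A | adj x y]| <= d} ->
  exists I : {set U}, [/\ I \subset A, independent I & #|A| <= d.+1 * #|I|].
Proof.
move=> A_deg; pose P := [pred I : {set U} | (I \subset A) && independent I].
have P0 : P set0 by rewrite /= sub0set; apply/independentP => x; rewrite inE.
have [I /maxsetP[/andP[IA I_ind] I_max] _] := maxset_exists P0.
exists I; split=> //.
pose N x := x |: [set y in A | adj x y].
have A_cover : A \subset cover (N @: I).
  rewrite cover_imset; apply/subsetP => y yA.
  case: (boolP [exists x in I, adj x y]) => [/exists_inP[x xI adj_xy] | no_adj].
  - by apply/bigcupP; exists x; rewrite // !inE yA adj_xy orbT.
  - suff yI : y \in I by apply/bigcupP; exists y; rewrite // setU11.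
    have yI_P : P (y |: I).
      rewrite /= subUset sub1set yA IA; apply: independent_setU1 => // x xI.
      by rewrite adj_sym; apply: contraNN no_adj => adj_xy; apply/exists_inP; exists x.
    by rewrite -(I_max _ yI_P (subsetUr _ _)) setU11.
have N_card x : x \in I -> #|N x| <= d.+1.
  move=> xI; rewrite cardsU1 -add1n leq_add ?leq_b1 //.
  exact: A_deg (subsetP IA x xI).
apply: (leq_trans (subset_leq_card A_cover)).
have [cover_le _] := leq_card_cover (N @: I).
apply: (leq_trans cover_le); rewrite mulnC.
apply: leq_trans (_ : \sum_(B in N @: I) d.+1 <= _).
  by apply: leq_sum => _ /imsetP[x xI ->]; apply: N_card.
by rewrite sum_nat_const leq_mul2r leq_imset_card orbT.
Qed.

End Independence.

Lemma card_bigcup_disjoint (I : eqType) (U : finType) (r : seq I) (F : I -> {set U}) :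
  uniq r -> {in r &, forall i j, i != j -> [disjoint F i & F j]} ->
  #|\bigcup_(i <- r) F i| = \sum_(i <- r) #|F i|.
Proof.
elim: r => [|a r IH] /=; first by rewrite !big_nil cards0.
case/andP=> a_notin_r r_uniq F_disj.
have Fa_disj : [disjoint F a & \bigcup_(i <- r) F i].
  rewrite big_seq; apply: (big_ind (fun X : {set U} => [disjoint F a & X])).
  - by rewrite -setI_eq0 setI0.
  - by move=> X Y; rewrite -!setI_eq0 setIUr => /eqP-> /eqP->; rewrite setU0.
  - move=> i ir; apply: F_disj; rewrite ?inE ?eqxx ?ir ?orbT //.
    by apply: contraNneq a_notin_r => ->.
rewrite !big_cons -IH //; last first.
  by move=> i j ir jr; apply: F_disj; rewrite inE ?ir ?jr orbT.
by have [_] := leq_card_setU (F a) (\bigcup_(i <- r) F i); rewrite Fa_disj => /eqP.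
Qed.

Lemma card_setI_exchange (T : finType) (n : nat) (t u : {set T}) :
  #|t| = n.+1 -> #|u| = n.+1 -> #|t :&: u| = n ->
  exists2 p, p \in setX t (u :\: t) & u = p.2 |: (t :\ p.1).
Proof.
move=> ct cu ctu.
have /cards1P[a ta] : #|t :\: u| == 1 by have := cardsID u t; lia.
have /cards1P[b tb] : #|u :\: t| == 1 by have := cardsID t u; rewrite setIC; lia.
have /setDP[a_t _] : a \in t :\: u by rewrite ta set11.
have b_ut : b \in u :\: t by rewrite tb set11.
exists (a, b); first by rewrite in_setX a_t b_ut.
apply/setP => z; move/setP: ta => /(_ z); move/setP: tb => /(_ z); rewrite /= !inE.
by case: (z \in t); case: (z \in u) => /= <- <-.
Qed.

Section TriangularGraph.

Variables (T : finType) (e : rel T).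

Definition triples (S : {set T}) : {set {set T}} :=
  [set t : {set T} | t \subset S & #|t| == 3].

Lemma tri_adj_irr : irreflexive (tri_adj e).
Proof. by move=> t; rewrite /tri_adj eqxx. Qed.

Lemma tri_adj_sym : symmetric (tri_adj e).
Proof.
move=> t1 t2; rewrite /tri_adj eq_sym; congr (_ && _).
by apply/existsP/existsP => -[x /existsP[y /and5P[]]] *;
  exists x; apply/existsP; exists y; apply/and5P.
Qed.

Lemma leq_alpha_tri (I : {set {set T}}) : tri_independent e I -> #|I| <= alpha_tri e.
Proof. exact: (@leq_bigmax_cond _ (tri_independent e) (fun J => #|J|)). Qed.

Hypothesis e_irr : irreflexive e.

Lemma card_setI_tri_adj (t u : {set T}) :
  #|t| = 3 -> #|u| = 3 -> tri_adj e t u -> #|t :&: u| = 2.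
Proof.
move=> ct cu /andP[neq_tu /existsP[x /existsP[y /and5P[exy xt yt xu yu]]]].
have neq_xy : x != y by apply: contraTneq exy => ->; rewrite e_irr.
apply/eqP; rewrite eqn_leq; apply/andP; split.
  rewrite leqNgt; apply: contra neq_tu => big_tu.
  have tu_t : t :&: u = t by apply/eqP; rewrite eqEcard subsetIl ct.
  have tu_u : t :&: u = u by apply/eqP; rewrite eqEcard subsetIr cu.
  by rewrite -tu_t tu_u.
have : [set x; y] \subset t :&: u by rewrite subUset !sub1set !inE xt xu yt yu.
by move/subset_leq_card; rewrite cards2 neq_xy.
Qed.

Lemma tri_adj_degree (S t : {set T}) :
  t \in triples S -> #|[set u in triples S | tri_adj e t u]| <= 3 * (#|S| - 3).
Proof.
rewrite inE => /andP[tS /eqP ct].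
have -> : 3 * (#|S| - 3) = #|setX t (S :\: t)|.
  by rewrite cardsX ct cardsD (setIidPr tS) ct.
pose swap (p : T * T) := p.2 |: (t :\ p.1).
apply: leq_trans (leq_imset_card swap _); apply: subset_leq_card.
apply/subsetP => u; rewrite !inE => /andP[/andP[uS /eqP cu] adj_tu].
have [p] := card_setI_exchange ct cu (card_setI_tri_adj ct cu adj_tu).
rewrite !inE => /andP[pt /andP[p_notin_t pu]] ->.
by apply: imset_f; rewrite !inE pt p_notin_t (subsetP uS).
Qed.

Variables (k : nat) (S : 'I_k -> {set T}).
Hypotheses (S_clique : forall i, is_clique e (S i))
           (S_disj : edge_disjoint_cliques e S).

Lemma triple_is_triangle i (t : {set T}) : t \in triples (S i) -> is_triangle e t.
Proof.
rewrite inE /is_triangle => /andP[tS ->] /=.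
apply/forall_inP => x xt; apply/forall_inP => y yt; apply/implyP.
exact: S_clique (subsetP tS x xt) (subsetP tS y yt).
Qed.

Lemma tri_adj_triples i j (t u : {set T}) :
  t \in triples (S i) -> u \in triples (S j) -> tri_adj e t u -> i = j.
Proof.
rewrite !inE => /andP[tS _] /andP[uS _].
case/andP => _ /existsP[x /existsP[y /and5P[exy xt yt xu yu]]].
have [Si Sj] := (subsetP tS, subsetP uS).
exact: S_disj exy (Si x xt) (Si y yt) (Sj x xu) (Sj y yu).
Qed.

Lemma triples_disjoint i j : i != j -> [disjoint triples (S i) & triples (S j)].
Proof.
move=> neq_ij; rewrite -setI_eq0; apply/eqP/setP => t; rewrite !inE.
apply/negbTE; apply: contra neq_ij => /andP[/andP[tSi ct] /andP[tSj _]].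
have [x [y [xt yt neq_xy]]] : exists x y, [/\ x \in t, y \in t & x != y].
  by apply/card_gt1P; rewrite (eqP ct).
have [Si Sj] := (subsetP tSi, subsetP tSj).
apply/eqP/(S_disj (S_clique (Si x xt) (Si y yt) neq_xy)); by [apply: Si | apply: Sj].
Qed.

End TriangularGraph.

Local Open Scope ring_scope.

Theorem lemma5p7 (T : finType) (e : rel T) (k : nat) (S : 'I_k -> {set T}) :
  simple_graph e ->
  (forall i, is_clique e (S i)) ->
  (forall i, (3 <= #|S i|)%N) ->
  edge_disjoint_cliques e S ->
  \sum_(i < k) ('C(#|S i|, 3))%:R / (1 + 3 * (#|S i| - 3))%:R
    <= (alpha_tri e)%:R :> rat.
Proof.
(* No use of [3 <= #|S i|]: for a smaller clique the i-th term is 0. *)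
move=> [e_irr _] S_clique _ S_disj.
have F_ex i : exists F : {set {set T}},
    [/\ F \subset triples (S i), independent (tri_adj e) F
      & #|triples (S i)| <= (3 * (#|S i| - 3)).+1 * #|F|]%N.
  have [F F_spec] := independent_subset_degree (tri_adj_irr e) (tri_adj_sym e)
    (tri_adj_degree e_irr (S := S i)).
  by exists F.
have [F F_spec] := fin_all_exists F_ex.
have F_sub i : F i \subset triples (S i) by case: (F_spec i).
have F_triples i := subsetP (F_sub i).
pose I := \bigcup_i F i.
have I_ind : tri_independent e I.
  apply/andP; split.
    apply/forall_inP => t /bigcupP[i _ /F_triples ti].
    exact (triple_is_triangle S_clique ti).
  apply: independent_bigcup => [i | i j t u /F_triples ti /F_triples uj].
    by case: (F_spec i).
  exact (tri_adj_triples S_disj ti uj).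
have card_I : #|I| = (\sum_i #|F i|)%N.
  apply: card_bigcup_disjoint (index_enum_uniq _) _ => i j _ _ neq_ij.
  exact (disjointW (F_sub i) (F_sub j) (triples_disjoint S_clique S_disj neq_ij)).
apply: le_trans (_ : #|I|%:R <= _); last by rewrite ler_nat leq_alpha_tri.
rewrite card_I natr_sum; apply: ler_sum => i _.
have [_ _] := F_spec i; rewrite cards_draws.
by rewrite ler_pdivrMr ?ltr0n // -natrM ler_nat mulnC add1n.
Qed.
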